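(* In the slot formulation of the weighted balls-into-bins process, for every $0<a<\lambda/2$ and every $t\ge0$, $$\mathbb E\left[\Phi(x^s(t+1))-\Phi(x^s(t))\,\middle|\,x^s(t)\right]\le\sum_{i=1}^N\left(p_i\left(a+Sa^2\right)-\left(\frac aN-S\frac{a^2}{N^2}\right)\right)e^{a x^s_i(t)}.$$
   Context: Weighted balls into weighted bins: $n$ bins with positive integer weights $N_1,\dots,N_n$, $N=\sum_iN_i$; $\mathcal D$ on $[n]$ is $(\alpha,\beta)$-biased, i.e. $\frac{N_i}{\alpha N}\le\Pr_{\mathcal D}[i]\le\frac{\beta N_i}{N}$. Ball weights $w(t)$ are i.i.d. from $\mathcal W$ on $[0,\infty)$ with $\mathbb E[\mathcal W]=1$ and $M(z)=\mathbb E[e^{z\mathcal W}]$ finite at $z=\lambda$ for some $\lambda>0$; $S\ge1$ is a constant with $M''(z)\le2S$ for all $|z|<\lambda/2$. Each round two bins are sampled independently from $\mathcal D$ and the ball goes to the sampled bin with smaller value $v_i(t-1)=w_i(t-1)/N_i$ ($w_i(t)$ = total weight in bin $i$ after round $t$). Slot formulation: bin $i$ consists of $N_i$ unit slots, each with value $v_i(t)$; the normalized slot vector $x^s(t)\in\mathbb R^N$ has, for each slot of bin $i$, the entry $v_i(t)-\frac1N\sum_{t'\le t}w(t')$, and its entries are indexed in nonincreasing order $x^s_1(t)\ge\dots\ge x^s_N(t)$. Equivalently, each round two slots are drawn independently (a slot of bin $i$ with probability $\Pr_{\mathcal D}[i]/N_i$), the one later in the sorted order is selected, and the ball's weight is spread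 evenly over the slots of its bin. $p_i=p_i(t)$ is the conditional probability, given $x^s(t)$, that the selected slot in round $t+1$ is the $i$-th slot in the sorted order. For $a>0$ and $y\in\mathbb R^N$: $\Phi(y)=\sum_je^{ay_j}$, $\Psi(y)=\sum_je^{-ay_j}$, $\Gamma(y)=\Phi(y)+\Psi(y)$. *)

From HB Require Import structures.
From mathcomp Require Import all_boot all_order all_algebra.
From mathcomp Require Import all_classical all_reals all_analysis.
Set Implicit Arguments. Unset Strict Implicit. Unset Printing Implicit Defensive.
Import Order.TTheory GRing.Theory Num.Theory.
Import numFieldNormedType.Exports.
Local Open Scope ring_scope.

Definition totalN (n : nat) (Nw : 'I_n -> nat) : nat := \sum_(i < n) Nw i.

(* slots: bin i consists of N_i unit slots *)
Definition slot (n : nat) (Nw : 'I_n -> nat) := {i : 'I_n & 'I_(Nw i)}.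

Definition slot_val (R : realType) (n : nat) (Nw : 'I_n -> nat)
  (w : 'I_n -> R) (i : 'I_n) : R :=
  w i / (Nw i)%:R - (\sum_(j < n) w j) / (totalN Nw)%:R.

Definition add_load (R : realType) (n : nat) (w : 'I_n -> R) (b : 'I_n) (ww : R)
  : 'I_n -> R := fun j => if j == b then w j + ww else w j.

Definition Phi (R : realType) (m : nat) (a : R) (y : 'I_m -> R) : R :=
  \sum_(j < m) expR (a * y j).

(* probability that a single draw picks slot s : Pr_D[i] / N_i, i the bin of s *)
Definition qslot (R : realType) (n : nat) (Nw : 'I_n -> nat) (D : 'I_n -> R)
  (s : slot Nw) : R := D (tag s) / (Nw (tag s))%:R.

Definition later (m : nat) (k1 k2 : 'I_m) : 'I_m := if (k1 <= k2)%N then k2 else k1.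

(* p_k: probability that the selected slot is the k-th in the sorted order pi *)
Definition psel (R : realType) (n : nat) (Nw : 'I_n -> nat) (D : 'I_n -> R)
  (pi : 'I_(totalN Nw) -> slot Nw) (k : 'I_(totalN Nw)) : R :=
  \sum_(k1 < totalN Nw) \sum_(k2 < totalN Nw)
     (if later k1 k2 == k then qslot D (pi k1) * qslot D (pi k2) else 0).

Definition mgf (R : realType) (P : probability R R) (z : R) : R :=
  fine (\int[P]_x (expR (z * x))%:E)%E.

Definition xs (R : realType) (n : nat) (Nw : 'I_n -> nat) (w : 'I_n -> R)
  (pi : 'I_(totalN Nw) -> slot Nw) : 'I_(totalN Nw) -> R :=
  fun k => slot_val Nw w (tag (pi k)).

(* E[ Phi(x^s(t+1)) - Phi(x^s(t)) | state ] : two slots drawn independently,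
   the later one (in the sorted order pi) is selected, a ball of weight
   W ~ P is put into its bin. *)
Arguments xs {R n} Nw w pi.
Arguments psel {R n} Nw D pi k.

Definition exp_change (R : realType) (n : nat) (Nw : 'I_n -> nat) (D : 'I_n -> R)
  (P : probability R R) (a : R) (w : 'I_n -> R)
  (pi : 'I_(totalN Nw) -> slot Nw) : \bar R :=
  (\sum_(k1 < totalN Nw) \sum_(k2 < totalN Nw)
     (qslot D (pi k1) * qslot D (pi k2))%:E *
     \int[P]_ww (Phi a (xs Nw (add_load w (tag (pi (later k1 k2))) ww) pi)
                 - Phi a (xs Nw w pi))%:E)%E.

Arguments exp_change {R n} Nw D P a w pi.

From HB Require Import structures.
From mathcomp Require Import all_boot all_order all_algebra.
From mathcomp Require Import all_classical all_reals all_analysis.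
From mathcomp Require Import measurable_realfun ring lra.
Import Order.TTheory GRing.Theory Num.Theory.
Import numFieldNormedType.Exports.
Local Open Scope ring_scope.
Set Implicit Arguments. Unset Strict Implicit. Unset Printing Implicit Defensive.

(* Write E_k = e^(a x_k) and let M be the moment generating function of the
   ball weight W.  Putting weight W into bin b moves the k-th normalised slot
   value by W u_k, where u_k = [bin k = b]/N_b - 1/N, so given the selected bin
   the expected change of Phi is sum_k E_k (M(a u_k) - 1).  Since M(0) = M'(0) = 1
   and M'' <= 2S on (-lam/2, lam/2), Taylor's theorem gives
   M(z) - 1 <= z + S z^2 for |z| <= a, and
   a u_k + S (a u_k)^2 <= [bin k = b]/N_b (a + S a^2) - (a/N - S a^2/N^2).
   The first term, summed over the N_b slots of bin b, leaves E_b (a + S a^2);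
   averaging over the selected slot turns it into sum_i p_i (a + S a^2) E_i. *)

Section real_analysis.
Variable R : realType.
Implicit Types (f df : R -> R) (c S x y z : R).

Lemma nincr_derive_le0 f df x y : x <= y ->
  (forall t, x <= t <= y -> is_derive t 1 f (df t)) ->
  (forall t, x < t < y -> df t <= 0) -> f y <= f x.
Proof.
move=> xy fd dfle.
have der t : t \in `[x, y] -> derivable f t 1.
  by rewrite in_itv => /fd [].
apply: (ler0_derive1_le_cc (a := x) (b := y)); rewrite ?in_itv /= ?lexx ?xy //.
- by move=> t; rewrite in_itv => /andP[? ?]; apply: der; rewrite in_itv /= !ltW.
- move=> t; rewrite in_itv => /andP[tx ty].
  have fdt : is_derive t 1 f (df t) by apply: fd; rewrite !ltW.
  by rewrite derive1E derive_val; apply: dfle; apply/andP.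
- exact: derivable_within_continuous.
Qed.

Lemma ndecr_derive_ge0 f df x y : x <= y ->
  (forall t, x <= t <= y -> is_derive t 1 f (df t)) ->
  (forall t, x < t < y -> 0 <= df t) -> f x <= f y.
Proof.
move=> xy fd dfge; rewrite -lerN2.
apply: (nincr_derive_le0 (f := fun t => - f t) (df := fun t => - df t)) => //.
- by move=> t /fd fdt; apply: is_derive_eq.
- by move=> t /dfge; rewrite oppr_le0.
Qed.

Lemma taylor2_le f f1 f2 c S :
  (forall t : R, `|t| < c -> is_derive t 1 f (f1 t)) ->
  (forall t : R, `|t| < c -> is_derive t 1 f1 (f2 t)) ->
  (forall t : R, `|t| < c -> f2 t <= 2 * S) ->
  forall z, `|z| < c -> f z <= f 0 + f1 0 * z + S * z ^+ 2.
Proof.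
move=> fd f1d f2le z zc.
have inside (s t r : R) : `|s| < c -> `|t| < c -> s <= r <= t -> `|r| < c.
  by rewrite !ltr_norml => /andP[? ?] /andP[? ?] /andP[? ?]; apply/andP; lra.
pose h t := f1 t - f1 0 - 2 * S * t.
have h_nincr (s t : R) : `|s| < c -> `|t| < c -> s <= t -> h t <= h s.
  move=> sc tc st; apply: (nincr_derive_le0 (f := h) (df := fun r => f2 r - 2 * S)) => //.
  - move=> r /(inside _ _ _ sc tc) /f1d f1dr; rewrite /h; apply: is_derive_eq.
    by rewrite /GRing.scale /= ?mulr1; ring.
  - by move=> r /andP[sr rt]; rewrite subr_le0 f2le // (inside s t) // !ltW.
pose g t := f t - f 0 - f1 0 * t - S * t ^+ 2.
have gd (t : R) : `|t| < c -> is_derive t 1 g (h t).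
  move=> /fd fdt; rewrite /g; apply: is_derive_eq.
  by rewrite /h /GRing.scale /= ?mulr1; ring.
have c0 : 0 < c by apply: le_lt_trans zc.
have h0 : `|0 : R| < c by rewrite normr0.
have h00 : h 0 = 0 by rewrite /h mulr0 subrr subr0.
suff : g z <= g 0 by rewrite /g; lra.
have [z0|z0] := leP 0 z.
- apply: (nincr_derive_le0 (f := g) (df := h)) => // [t tz|t /andP[t0 tz]].
    by apply: gd; apply: (inside 0 z).
  have tc : `|t| < c by apply: (inside 0 z); rewrite // !ltW.
  by rewrite -h00; apply: h_nincr; rewrite // ltW.
- apply: (ndecr_derive_ge0 (f := g) (df := h)) => [|t tz|t /andP[zt t0]]; first exact: ltW.
    by apply: gd; apply: (inside z 0).
  have tc : `|t| < c by apply: (inside z 0); rewrite // !ltW.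
  by rewrite -h00; apply: h_nincr; rewrite // ltW.
Qed.

Lemma id_le_expR c y : 0 < c -> y <= c^-1 * expR (c * y).
Proof.
move=> c0; rewrite -(ler_pM2l c0) mulrA mulfV ?gt_eqF // mul1r.
by apply: le_trans (expR_ge1Dx _); rewrite lerDr.
Qed.

Lemma sqr_le_expR c y : 0 < c -> 0 <= y -> y ^+ 2 <= 2 / c ^+ 2 * expR (c * y).
Proof.
move=> c0 y0.
have := expR_ge1Dxn 1 (mulr_ge0 (ltW c0) y0); rewrite (_ : 2`!%:R = 2 :> R) //.
have -> : y ^+ 2 = 2 / c ^+ 2 * ((c * y) ^+ 2 / 2) by field; rewrite gt_eqF.
by move=> e2; rewrite ler_pM2l ?divr_gt0 ?exprn_gt0 //; lra.
Qed.

Lemma exprn_expR_dominated lam : 0 < lam ->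
  exists2 K, 0 <= K & forall (k : nat) z y, (k <= 2)%N -> z <= lam / 2 -> 0 <= y ->
    `|y ^+ k * expR (z * y)| <= K * expR (lam * y).
Proof.
move=> lam0; set c := lam / 2.
have c0 : 0 < c by rewrite divr_gt0.
have cinv0 : 0 <= c^-1 by rewrite invr_ge0 ltW.
have csqr0 : 0 <= 2 / c ^+ 2 by rewrite divr_ge0 ?exprn_ge0 ?ltW.
exists (1 + c^-1 + 2 / c ^+ 2); first by rewrite !addr_ge0.
move=> k z y k2 zc y0.
have ecy : 1 <= expR (c * y) by rewrite -expR0 ler_expR mulr_ge0 // ltW.
have yk : y ^+ k <= (1 + c^-1 + 2 / c ^+ 2) * expR (c * y).
  have t1 : 0 <= c^-1 * expR (c * y) by rewrite mulr_ge0 ?expR_ge0.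
  have t2 : 0 <= 2 / c ^+ 2 * expR (c * y) by rewrite mulr_ge0 ?expR_ge0.
  rewrite !mulrDl mul1r; case: k k2 => [|[|[|//]]] _.
  - by rewrite expr0; lra.
  - by rewrite expr1; have := id_le_expR y c0; lra.
  - by have := sqr_le_expR c0 y0; lra.
have -> : lam * y = c * y + c * y by rewrite -mulrDl /c -splitr.
rewrite ger0_norm ?mulr_ge0 ?exprn_ge0 ?expR_ge0 // expRD mulrA.
by rewrite ler_pM ?exprn_ge0 ?expR_ge0 // ler_expR ler_wpM2r.
Qed.

End real_analysis.

Section mgf_moments.
Local Open Scope classical_set_scope.
Variables (R : realType) (P : probability R R).
Hypothesis P_nonneg : P [set x : R | x < 0] = 0%E.

Local Notation Rnneg := (`[0%R, +oo[ : set R).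

Let measurable_Rnneg : measurable Rnneg. Proof. exact: measurable_itv. Qed.

Lemma integral_Rnneg (f : R -> \bar R) : measurable_fun setT f ->
  (\int[P]_x f x = \int[P]_(x in Rnneg) f x)%E.
Proof.
move=> mf.
have mC : measurable (~` Rnneg) by apply: measurableC.
have nullC : P (~` Rnneg) = 0%E.
  rewrite -P_nonneg; congr (P _); apply/seteqP; split=> x /=;
    by rewrite in_itv /= andbT ltNge => /negP.
rewrite -(setUv Rnneg) integral_setU ?setUv ?disj_set2E ?setICr //.
by rewrite [X in (_ + X)%E]null_set_integral ?adde0 //; apply: measurable_funS mf.
Qed.

Lemma probability_Rnneg : P Rnneg = 1%E.
Proof.
have := @integral_Rnneg (cst 1%E) (measurable_cst _).
rewrite !integral_cst // !mul1e => <-.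
by move: (probability_setT P).
Qed.

(* The integrals are taken over [0, +oo[, where W lives, so that y^k e^(z y)
   is dominated by a multiple of e^(lam y) for every z <= lam / 2. *)
Definition mgf_deriv (k : nat) (z : R) : R :=
  \int[P]_(y in Rnneg) (y ^+ k * expR (z * y)).

Lemma measurable_exprn_expR (k : nat) (z : R) :
  measurable_fun setT (fun y : R => y ^+ k * expR (z * y)).
Proof. by apply: measurable_funM; [exact: exprn_measurable|exact: measurableT_comp]. Qed.

Lemma mgf_derivE k z :
  mgf_deriv k z = fine (\int[P]_x (x ^+ k * expR (z * x))%:E)%E.
Proof.
rewrite /mgf_deriv /Rintegral integral_Rnneg //.
by apply/measurable_EFinP; exact: measurable_exprn_expR.
Qed.

Lemma mgfE : mgf P = mgf_deriv 0.
Proof.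
apply/funext => z; rewrite mgf_derivE /mgf.
by congr fine; apply: eq_integral => y _; rewrite expr0 mul1r.
Qed.

Lemma mgf_deriv0_0 : mgf_deriv 0 0 = 1.
Proof.
rewrite mgf_derivE (eq_integral (cst 1%:E)); last first.
  by move=> y _; rewrite expr0 mul0r expR0 mulr1.
by rewrite integral_cst // mul1e; move: (probability_setT P) => /= ->.
Qed.

Lemma mgf_deriv1_0 : (\int[P]_x x%:E = 1)%E -> mgf_deriv 1 0 = 1.
Proof.
move=> mean1; rewrite mgf_derivE (eq_integral (fun x => x%:E)) ?mean1 //.
by move=> y _; rewrite expr1 mul0r expR0 mulr1.
Qed.

Variable lam : R.
Hypotheses (lam_gt0 : 0 < lam)
  (expR_lam_integrable : P.-integrable setT (fun x => (expR (lam * x))%:E)).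

Lemma expR_lam_integrable_Rnneg (K : R) :
  P.-integrable Rnneg (EFin \o (fun y => K * expR (lam * y))).
Proof.
apply: (integrableS measurableT) => //.
rewrite (_ : _ \o _ = fun y => (K%:E * (expR (lam * y))%:E)%E).
  exact: integrableZl.
by apply/funext => y; rewrite /= EFinM.
Qed.

Lemma mgf_deriv_integrable (k : nat) (z : R) : (k <= 2)%N -> z <= lam / 2 ->
  P.-integrable Rnneg (EFin \o (fun y => y ^+ k * expR (z * y))).
Proof.
move=> k2 zlam; have [K K0 dom] := exprn_expR_dominated lam_gt0.
apply: le_integrable (expR_lam_integrable_Rnneg K) => //.
- by apply/measurable_EFinP; exact: measurable_funS (measurable_exprn_expR _ _).
- move=> y; rewrite /= in_itv /= andbT => y0.
  by rewrite lee_fin [leRHS]ger0_norm ?mulr_ge0 ?expR_ge0 ?dom.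
Qed.

Lemma is_derive_mgf_deriv (k : nat) (z : R) : (k <= 1)%N -> `|z| < lam / 2 ->
  is_derive z 1 (mgf_deriv k) (mgf_deriv k.+1 z).
Proof.
move=> k1 zlam; have [K K0 dom] := exprn_expR_dominated lam_gt0.
pose f (x y : R) := y ^+ k * expR (x * y).
have fd (x y : R) : is_derive x 1 (f^~ y) (y ^+ k.+1 * expR (x * y)).
  by rewrite /f; apply: is_derive_eq; rewrite /GRing.scale /= mulr0 add0r mulr1 exprSr; ring.
have Iz : `]- (lam / 2), lam / 2[ z by rewrite /= in_itv /= -ltr_norml.
have intf x : `]- (lam / 2), lam / 2[ x -> P.-integrable Rnneg (EFin \o f x).
  by rewrite /= in_itv /= => /andP[_ /ltW]; apply: mgf_deriv_integrable; exact: leq_trans k1 _.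
have derf x y : `]- (lam / 2), lam / 2[ x -> Rnneg y -> derivable (f^~ y) x 1 by [].
have pf x y : partial1of2 f x y = y ^+ k.+1 * expR (x * y).
  by rewrite partial1of2E derive_val.
have domf x y : `]- (lam / 2), lam / 2[ x -> Rnneg y ->
    `|partial1of2 f x y| <= K * expR (lam * y).
  by rewrite pf /= !in_itv /= andbT => /andP[_ /ltW]; apply: dom.
have dK y : 0 <= K * expR (lam * y) by rewrite mulr_ge0 ?expR_ge0.
have := derivableP (derivable_under_integral measurable_Rnneg Iz intf derf dK
  (expR_lam_integrable_Rnneg K) domf).
rewrite -derive1E (differentiation_under_integral measurable_Rnneg Iz intf derf dK
  (expR_lam_integrable_Rnneg K) domf).
by under eq_Rintegral do rewrite pf.
Qed.

Lemma derive1n2_mgf (z : R) : `|z| < lam / 2 -> derive1n 2 (mgf P) z = mgf_deriv 2 z.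
Proof.
move=> zlam; have zI : z \in `]- (lam / 2), lam / 2[%R by rewrite in_itv /= -ltr_norml.
rewrite mgfE /derive1n /= derive1E (@near_eq_derive _ _ _ _ (mgf_deriv 1)).
  by have := @is_derive_mgf_deriv 1 _ isT zlam; move=> ?; rewrite derive_val.
move: (near_in_itvoo zI); apply: filterS => t; rewrite in_itv /= -ltr_norml => tlam.
by have := @is_derive_mgf_deriv 0 _ isT tlam; move=> ?; rewrite derive1E derive_val.
Qed.

Lemma mgf_le_quadratic (S : R) : (\int[P]_x x%:E = 1)%E ->
  (forall z, `|z| < lam / 2 -> derive1n 2 (mgf P) z <= 2 * S) ->
  forall z, `|z| < lam / 2 -> mgf P z <= 1 + z + S * z ^+ 2.
Proof.
move=> mean1 mgf2 z zlam.
have := @taylor2_le R (mgf_deriv 0) (mgf_deriv 1) (mgf_deriv 2) (lam / 2) S _ _ _ z zlam.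
rewrite mgf_deriv0_0 mgf_deriv1_0 // mul1r mgfE; apply.
- by move=> t; apply: is_derive_mgf_deriv.
- by move=> t; apply: is_derive_mgf_deriv.
- by move=> t tlam; rewrite -derive1n2_mgf // mgf2.
Qed.

Lemma expR_integrable_Rnneg (d : R) : d <= lam / 2 ->
  P.-integrable Rnneg (EFin \o (fun w => expR (d * w))).
Proof.
move=> dlam; apply: eq_integrable (@mgf_deriv_integrable 0 _ isT dlam) => // w _.
by rewrite /= expr0 mul1r.
Qed.

Lemma expR_sub1_integrable (d : R) : d <= lam / 2 ->
  P.-integrable Rnneg (EFin \o (fun w => expR (d * w) - 1)).
Proof.
move=> dlam; have one := finite_measure_integrable_cst P 1 measurable_Rnneg.
exact: eq_integrable (integrableB measurable_Rnneg (expR_integrable_Rnneg dlam) one).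
Qed.

Lemma integral_expR_sub1 (d : R) : d <= lam / 2 ->
  (\int[P]_(w in Rnneg) (expR (d * w) - 1)%:E = (mgf P d - 1)%:E)%E.
Proof.
move=> dlam; have expd := expR_integrable_Rnneg dlam.
have one := finite_measure_integrable_cst P 1 measurable_Rnneg.
under eq_integral do rewrite EFinB.
rewrite integralB_EFin // EFinB mgfE /mgf_deriv /Rintegral.
rewrite integral_cst // mul1e; move: probability_Rnneg => /= ->.
rewrite fineK; last exact: integrable_fin_num (@mgf_deriv_integrable 0 _ isT dlam).
by rewrite EFinN; congr (_ - _)%E; apply: eq_integral => w _; rewrite expr0 mul1r.
Qed.

Lemma integral_sum_expR_sub1 (m : nat) (E d : 'I_m -> R) :
  (forall k, d k <= lam / 2) ->
  (\int[P]_w (\sum_(k < m) E k * (expR (d k * w) - 1))%:E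
   = (\sum_(k < m) E k * (mgf P (d k) - 1))%:E)%E.
Proof.
move=> dlam.
have termE k : (\int[P]_(w in Rnneg) (E k * (expR (d k * w) - 1))%:E
    = (E k * (mgf P (d k) - 1))%:E)%E.
  under eq_integral do rewrite EFinM.
  by rewrite integralZl ?expR_sub1_integrable // integral_expR_sub1 // EFinM.
rewrite integral_Rnneg; last first.
  apply/measurable_EFinP; apply: measurable_sum => k.
  by apply: measurable_funM => //; apply: measurable_funB => //; exact: measurableT_comp.
under eq_integral do rewrite -sumEFin.
rewrite integral_sum // => [|k]; first by rewrite -sumEFin; apply: eq_bigr => k _.
exact: eq_integrable (integrableZl measurable_Rnneg (E k) (expR_sub1_integrable (dlam k))).
Qed.

End mgf_moments.

Section slots.
Variables (R : realType) (n : nat) (Nw : 'I_n -> nat).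
Hypothesis Nw_gt0 : forall i, (0 < Nw i)%N.
Local Notation N := (totalN Nw).

Lemma totalN_gt0 (i : 'I_n) : (0 < N)%N.
Proof. by rewrite /totalN (bigD1 i) //= ltn_addr. Qed.

Lemma sum_slot_tag (G : 'I_n -> R) :
  \sum_(s : slot Nw) G (tag s) = \sum_(i < n) (Nw i)%:R * G i.
Proof.
have := sig_big_dep (op := +%R) xpredT (fun _ _ => true) (fun i (_ : 'I_(Nw i)) => G i).
rewrite /= => <-; apply: eq_bigr => i _.
by rewrite sumr_const card_ord mulr_natl.
Qed.

Definition slot_share (b i : 'I_n) : R := (i == b)%:R / (Nw i)%:R.

Lemma slot_share_ge0 (b i : 'I_n) : 0 <= slot_share b i.
Proof. exact: divr_ge0. Qed.

Lemma slot_share_le1 (b i : 'I_n) : slot_share b i <= 1.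
Proof.
rewrite ler_pdivrMr ?ltr0n // mul1r.
by case: (_ == _); rewrite ?ler1n ?ler0n.
Qed.

Definition unit_shift (b i : 'I_n) : R := slot_share b i - N%:R^-1.

Lemma slot_val_add_load (w : 'I_n -> R) (b i : 'I_n) (ww : R) :
  slot_val Nw (add_load w b ww) i = slot_val Nw w i + unit_shift b i * ww.
Proof.
have sumE : \sum_(j < n) add_load w b ww j = \sum_(j < n) w j + ww.
  rewrite (bigD1 b) //= [in RHS](bigD1 b) //= {1}/add_load eqxx.
  rewrite (eq_bigr w) => [|j /negbTE jb]; last by rewrite /add_load jb.
  by rewrite addrAC.
rewrite /slot_val sumE /unit_shift /slot_share /add_load.
by case: eqP => [->|_] /=; ring.
Qed.

Lemma Phi_add_load (a : R) (w : 'I_n -> R) (pi : 'I_N -> slot Nw) (b : 'I_n) (ww : R) :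
  Phi a (xs Nw (add_load w b ww) pi) - Phi a (xs Nw w pi) =
  \sum_(k < N) expR (a * xs Nw w pi k) *
    (expR (a * unit_shift b (tag (pi k)) * ww) - 1).
Proof.
rewrite /Phi -sumrB; apply: eq_bigr => k _.
by rewrite /xs slot_val_add_load mulrDr expRD mulrA; ring.
Qed.

Lemma unit_shift_quadratic_le (a S : R) (b i : 'I_n) : 0 <= a -> 0 <= S ->
  a * unit_shift b i + S * (a * unit_shift b i) ^+ 2 <=
  slot_share b i * (a + S * a ^+ 2) - (a / N%:R - S * a ^+ 2 / N%:R ^+ 2).
Proof.
move=> a0 S0; have u0 := slot_share_ge0 b i; have u1 := slot_share_le1 b i.
rewrite /unit_shift; set u := slot_share b i; set v : R := N%:R^-1.
have v0 : 0 <= v by rewrite invr_ge0.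
rewrite -subr_ge0.
have -> : u * (a + S * a ^+ 2) - (a / N%:R - S * a ^+ 2 / N%:R ^+ 2) -
    (a * (u - v) + S * (a * (u - v)) ^+ 2) = S * a ^+ 2 * (u * (1 - u) + 2 * u * v).
  by rewrite /v -exprVn; ring.
apply: mulr_ge0; first by rewrite mulr_ge0 ?sqr_ge0.
by rewrite addr_ge0 ?mulr_ge0 ?subr_ge0.
Qed.

Lemma norm_unit_shift_le1 (b i : 'I_n) : `|unit_shift b i| <= 1.
Proof.
have u0 := slot_share_ge0 b i; have u1 := slot_share_le1 b i.
have v0 : 0 <= N%:R^-1 :> R by rewrite invr_ge0.
have v1 : N%:R^-1 <= 1 :> R by rewrite invf_le1 ?ltr0n ?ler1n (totalN_gt0 i).
by rewrite /unit_shift ler_norml; apply/andP; split; lra.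
Qed.

Variable pi : 'I_N -> slot Nw.
Hypothesis pi_bij : bijective pi.

Lemma sum_sorted_slot_tag (G : 'I_n -> R) :
  \sum_(k < N) G (tag (pi k)) = \sum_(i < n) (Nw i)%:R * G i.
Proof.
rewrite -sum_slot_tag (reindex pi (P := xpredT) (F := fun s : slot Nw => G (tag s))) //.
exact: onW_bij.
Qed.

Lemma sum_slot_share (G : 'I_n -> R) (b : 'I_n) :
  \sum_(k < N) slot_share b (tag (pi k)) * G (tag (pi k)) = G b.
Proof.
rewrite (sum_sorted_slot_tag (fun j => slot_share b j * G j)) /slot_share.
rewrite (bigD1 b) //= big1 => [|i /negbTE ->]; last by rewrite !mul0r mulr0.
by rewrite eqxx mul1r mulrA mulfV ?addr0 ?mul1r // pnatr_eq0 -lt0n.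
Qed.

Variable D : 'I_n -> R.
Hypotheses (D_ge0 : forall i, 0 <= D i) (D_sum1 : \sum_(i < n) D i = 1).

Lemma sum_qslot : \sum_(k < N) qslot D (pi k) = 1.
Proof.
rewrite /qslot (sum_sorted_slot_tag (fun j => D j / (Nw j)%:R)) -[RHS]D_sum1.
by apply: eq_bigr => i _; rewrite mulrC divfK // pnatr_eq0 -lt0n.
Qed.

Lemma sum_pairs_later (G : 'I_N -> R) :
  \sum_(k1 < N) \sum_(k2 < N) qslot D (pi k1) * qslot D (pi k2) * G (later k1 k2) =
  \sum_(i < N) psel Nw D pi i * G i.
Proof.
under [RHS]eq_bigr => i _ do
  (rewrite /psel mulr_suml; under eq_bigr => k1 _ do rewrite mulr_suml).
rewrite [RHS]exchange_big; apply: eq_bigr => k1 _.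
rewrite [RHS]exchange_big; apply: eq_bigr => k2 _.
rewrite (bigD1 (later k1 k2)) //= eqxx big1 ?addr0 // => i.
by rewrite eq_sym => /negbTE ->; rewrite mul0r.
Qed.

Lemma sum_pairs_const (c : R) :
  \sum_(k1 < N) \sum_(k2 < N) qslot D (pi k1) * qslot D (pi k2) * c = c.
Proof.
under eq_bigr do rewrite -mulr_suml -mulr_sumr sum_qslot mulr1.
by rewrite -mulr_suml sum_qslot mul1r.
Qed.

Lemma sum_pairs_selected_bin_le (G : 'I_n -> R) (H : 'I_n -> 'I_n -> R) (K C : R) :
  (forall i, 0 <= G i) ->
  (forall b i, H b i <= slot_share b i * K - C) ->
  \sum_(k1 < N) \sum_(k2 < N) qslot D (pi k1) * qslot D (pi k2) *
    \sum_(k < N) G (tag (pi k)) * H (tag (pi (later k1 k2))) (tag (pi k))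
  <= \sum_(i < N) (psel Nw D pi i * K - C) * G (tag (pi i)).
Proof.
move=> G_ge0 H_le; set SG := \sum_(k < N) G (tag (pi k)).
have inner b : \sum_(k < N) G (tag (pi k)) * H b (tag (pi k)) <= K * G b - C * SG.
  rewrite -(sum_slot_share G b) mulr_sumr /SG mulr_sumr -sumrB.
  apply: ler_sum => k _; rewrite mulrC.
  have -> : K * (slot_share b (tag (pi k)) * G (tag (pi k))) - C * G (tag (pi k)) =
    (slot_share b (tag (pi k)) * K - C) * G (tag (pi k)) by ring.
  exact: ler_wpM2r.
apply: (@le_trans _ _ (\sum_(k1 < N) \sum_(k2 < N) qslot D (pi k1) * qslot D (pi k2) *
    (K * G (tag (pi (later k1 k2))) - C * SG))).
  apply: ler_sum => k1 _; apply: ler_sum => k2 _; apply: ler_wpM2l (inner _).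
  by rewrite mulr_ge0 ?divr_ge0.
under eq_bigr do under eq_bigr do rewrite mulrBr.
under eq_bigr do rewrite sumrB.
rewrite sumrB (sum_pairs_later (fun i => K * G (tag (pi i)))) sum_pairs_const.
under [X in _ <= X]eq_bigr do rewrite mulrBl.
rewrite sumrB /SG mulr_sumr lerD2r.
by under eq_bigr do rewrite mulrA.
Qed.

End slots.

Theorem lemma3 (R : realType) (n : nat) (Nw : 'I_n -> nat) (D : 'I_n -> R)
  (alpha beta : R) (P : probability R R) (lam S a : R)
  (w : 'I_n -> R) (pi : 'I_(totalN Nw) -> slot Nw) :
  (forall i : 'I_n, (0 < Nw i)%N) ->
  (forall i : 'I_n, 0 <= D i) -> \sum_(i < n) D i = 1 ->
  (forall i : 'I_n, (Nw i)%:R / (alpha * (totalN Nw)%:R) <= D i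
             /\ D i <= beta * (Nw i)%:R / (totalN Nw)%:R) ->
  P [set x : R | x < 0]%classic = 0%E ->
  (\int[P]_x (x%:E) = 1)%E ->
  0 < lam ->
  P.-integrable setT (fun x => (expR (lam * x))%:E) ->
  1 <= S ->
  (forall z : R, `|z| < lam / 2 -> derive1n 2 (mgf P) z <= 2 * S) ->
  0 < a -> a < lam / 2 ->
  (forall i : 'I_n, 0 <= w i) ->
  bijective pi ->
  (forall k l : 'I_(totalN Nw), (k <= l)%N -> xs Nw w pi l <= xs Nw w pi k) ->
  (exp_change Nw D P a w pi <=
   (\sum_(i < totalN Nw)
      (psel Nw D pi i * (a + S * a ^+ 2)
       - (a / (totalN Nw)%:R - S * a ^+ 2 / ((totalN Nw)%:R ^+ 2)))
      * expR (a * xs Nw w pi i))%:E)%E.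
Proof.
move=> Nw_gt0 D_ge0 D_sum1 _ P_nonneg mean1 lam_gt0 expR_int S_ge1 mgf2 a_gt0 a_lt
  _ pi_bij _.
have shift_lt b i : `|a * unit_shift R Nw b i| < lam / 2.
  rewrite normrM gtr0_norm //; apply: (le_lt_trans _ a_lt).
  by rewrite -[leRHS]mulr1 ler_wpM2l ?(ltW a_gt0) ?norm_unit_shift_le1.
have change_integral b :
  (\int[P]_ww (Phi a (xs Nw (add_load w b ww) pi) - Phi a (xs Nw w pi))%:E =
   (\sum_(k < totalN Nw) expR (a * xs Nw w pi k) *
      (mgf P (a * unit_shift R Nw b (tag (pi k))) - 1))%:E)%E.
  under eq_integral do rewrite Phi_add_load.
  apply: (integral_sum_expR_sub1 P_nonneg lam_gt0 expR_int) => k.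
  by have := shift_lt b (tag (pi k)); rewrite ltr_norml => /andP[_ /ltW].
rewrite /exp_change.
under eq_bigr do under eq_bigr do rewrite change_integral -EFinM.
under eq_bigr do rewrite sumEFin.
rewrite sumEFin lee_fin.
apply: (sum_pairs_selected_bin_le Nw_gt0 pi_bij D_ge0 D_sum1
  (G := fun j => expR (a * slot_val Nw w j))
  (H := fun b j => mgf P (a * unit_shift R Nw b j) - 1)) => [j|b j].
  exact: expR_ge0.
have := mgf_le_quadratic P_nonneg lam_gt0 expR_int mean1 mgf2 (shift_lt b j).
have := unit_shift_quadratic_le Nw_gt0 b j (ltW a_gt0) (le_trans ler01 S_ge1).
lra.
Qed.
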